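(* If a privacy definition $\mathrm{Priv}=\{\mathcal{M}\}$ consists of just one algorithm $\mathcal{M}$, then $\mathrm{CNF}(\mathrm{Priv})$ is the set of all algorithms of the form $\mathcal{A}\circ\mathcal{M}$, where $\mathrm{range}(\mathcal{M})\subseteq\mathrm{domain}(\mathcal{A})$ and the random bits of $\mathcal{A}$ and $\mathcal{M}$ are independent of each other.
   Context: An algorithm $\mathcal{M}$ has a countable input domain $\mathbb{I}=\{D_1,D_2,\dots\}$ and a countable range; it is identified with its output probabilities $P(\mathcal{M}(D)=\omega)$ (two algorithms with the same domain, range and output probabilities are considered equal). A privacy definition is a set of algorithms with the same input domain. For algorithms $\mathcal{M}$ and $\mathcal{A}$ with $\mathrm{range}(\mathcal{M})\subseteq\mathrm{domain}(\mathcal{A})$ and independent randomness, $\mathcal{A}\circ\mathcal{M}$ runs $\mathcal{M}$ and then runs $\mathcal{A}$ on its output. The consistent normal form $\mathrm{CNF}(\mathrm{Priv})$ is the smallest set $S$ of algorithms containing $\mathrm{Priv}$ such that (post-processing) whenever $\mathcal{M}\in S$ and $\mathcal{A}$ is any algorithm whose domain contains $\mathrm{range}(\mathcal{M})$ with independent random bits, then $\mathcal{A}\circ\mathcal{M}\in S$; and (convexity) whenever $\mathcal{M}_1,\mathcal{M}_2\in S$ and $p\in[0,1]$, the algorithm that runs $\mathcal{M}_1$ with probability $p$ and $\mathcal{M}_2$ with probability $1-p$ belongs to $S$. *)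

From Stdlib Require Import Reals.
From Coquelicot Require Import Coquelicot.
Open Scope R_scope.

(* Outputs are encoded as natural numbers (a fixed universal countable
   output space).  A probability distribution over outputs is a nonnegative
   function summing to 1. *)
Definition is_dist (p : nat -> R) : Prop :=
  (forall w, 0 <= p w) /\ is_series p 1.

(* An algorithm with input domain I: its output probabilities
   M D w = P(M(D) = w). *)
Definition algo (I : Type) := I -> nat -> R.

Definition is_algorithm {I : Type} (M : algo I) : Prop :=
  forall D, is_dist (M D).

(* A post-processing algorithm A, defined on (a superset of) the range of M:
   A x w = P(A(x) = w). *)
Definition is_postproc (A : nat -> nat -> R) : Prop :=
  forall x, is_dist (A x).

(* Composition A o M with independent randomness:
   P((A o M)(D) = w) = sum_x P(M(D) = x) P(A(x) = w). *)
Definition postcomp {I : Type} (A : nat -> nat -> R) (M : algo I) : algo I :=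
  fun D w => Series (fun x => M D x * A x w).

Definition mix {I : Type} (p : R) (M1 M2 : algo I) : algo I :=
  fun D w => p * M1 D w + (1 - p) * M2 D w.

Definition closed_postproc {I : Type} (S : algo I -> Prop) : Prop :=
  forall M A, S M -> is_postproc A -> S (postcomp A M).

Definition closed_convex {I : Type} (S : algo I -> Prop) : Prop :=
  forall M1 M2 p, S M1 -> S M2 -> 0 <= p <= 1 -> S (mix p M1 M2).

Definition CNF {I : Type} (Priv : algo I -> Prop) (N : algo I) : Prop :=
  forall S : algo I -> Prop,
    (forall M, Priv M -> S M) -> closed_postproc S -> closed_convex S -> S N.

(* Every post-processing A o M lies in CNF({M}) by closure under post-processing.
   Conversely, the algorithms A o M form a set that contains M (A = identity kernel),
   is closed under post-processing (B o (A o M) = (B . A) o M with the composed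
   kernel, by Tonelli's theorem for nonnegative double series) and under mixtures
   (a mixture of A o M and B o M is the post-processing of M by the mixed kernel);
   minimality of CNF then gives the other inclusion. *)

From Stdlib Require Import Reals Lra Lia FunctionalExtensionality.
From Coquelicot Require Import Coquelicot.
Open Scope R_scope.

Section NonnegSeries.

Variable a : nat -> R.
Hypothesis a_ge0 : forall n, 0 <= a n.

Lemma sum_n_ge0 n : 0 <= sum_n a n.
Proof.
  induction n as [|n IH]; [rewrite sum_O; apply a_ge0|].
  rewrite sum_Sn; unfold plus; simpl; specialize (a_ge0 (S n)); lra.
Qed.

Lemma sum_n_incr n : sum_n a n <= sum_n a (S n).
Proof. rewrite sum_Sn; unfold plus; simpl; specialize (a_ge0 (S n)); lra. Qed.

Lemma sum_n_le_series l : is_series a l -> forall n, sum_n a n <= l.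
Proof. intros Hl; exact (is_lim_seq_incr_compare _ _ Hl sum_n_incr). Qed.

Lemma series_term_le l : is_series a l -> forall n, a n <= l.
Proof.
  intros Hl n; apply Rle_trans with (sum_n a n); [|exact (sum_n_le_series l Hl n)].
  destruct n as [|n]; [rewrite sum_O; lra|].
  rewrite sum_Sn; unfold plus; simpl; pose proof (sum_n_ge0 n); lra.
Qed.

Lemma ex_series_bounded B : (forall n, sum_n a n <= B) -> ex_series a.
Proof.
  intros HB; destruct (ex_finite_lim_seq_incr _ B sum_n_incr HB) as [l Hl].
  now exists l.
Qed.

End NonnegSeries.

Lemma series_le_of_sum_n_le (a : nat -> R) l B :
  is_series a l -> (forall n, sum_n a n <= B) -> l <= B.
Proof.
  intros Hl HB.
  exact (is_lim_seq_le (sum_n a) (fun _ => B) l B HB Hl (is_lim_seq_const B)).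
Qed.

Lemma ex_series_nonneg_le (a b : nat -> R) :
  (forall n, 0 <= a n <= b n) -> ex_series b -> ex_series a.
Proof.
  intros Hab; apply (@ex_series_le R_AbsRing R_CompleteNormedModule).
  intros n; specialize (Hab n); change (Rabs (a n) <= b n).
  rewrite Rabs_pos_eq; lra.
Qed.

Lemma is_series_sum_n_swap (b : nat -> nat -> R) (c : nat -> R) :
  (forall k, is_series (b k) (c k)) ->
  forall m, is_series (fun x => sum_n (fun k => b k x) m) (sum_n c m).
Proof.
  intros Hb m; induction m as [|m IH].
  - rewrite sum_O; eapply is_series_ext; [|apply Hb].
    intros n; now rewrite sum_O.
  - rewrite sum_Sn; eapply is_series_ext; [|exact (is_series_plus _ _ _ _ IH (Hb (S m)))].
    intros n; now rewrite sum_Sn.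
Qed.

Lemma is_series_swap_nonneg (a : nat -> nat -> R) (r : nat -> R) L :
  (forall x y, 0 <= a x y) -> (forall x, is_series (a x) (r x)) -> is_series r L ->
  exists c, (forall y, is_series (fun x => a x y) (c y)) /\ is_series c L.
Proof.
  intros Ha Hr HL.
  assert (Hr_ge0 : forall x, 0 <= r x).
  { intros x; apply Rle_trans with (a x 0%nat); [apply Ha|].
    exact (series_term_le _ (Ha x) _ (Hr x) 0). }
  pose (c := fun y => Series (fun x => a x y)).
  assert (Hcol : forall y, is_series (fun x => a x y) (c y)).
  { intros y; apply Series_correct, (ex_series_nonneg_le _ r); [|now exists L].
    intros x; split; [apply Ha|exact (series_term_le _ (Ha x) _ (Hr x) y)]. }
  assert (Hc_ge0 : forall y, 0 <= c y).
  { intros y; apply Rle_trans with (a 0%nat y); [apply Ha|].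
    exact (series_term_le _ (fun x => Ha x y) _ (Hcol y) 0). }
  assert (Hc_le : forall m, sum_n c m <= L).
  { intros m; rewrite <- (is_series_unique _ _ (is_series_sum_n_swap _ _ Hcol m)).
    rewrite <- (is_series_unique _ _ HL).
    apply Series_le; [|now exists L].
    intros x; split; [apply sum_n_ge0; auto|exact (sum_n_le_series _ (Ha x) _ (Hr x) m)]. }
  destruct (ex_series_bounded c Hc_ge0 L Hc_le) as [L' HL'].
  assert (L <= L').
  { apply (series_le_of_sum_n_le r L L' HL); intros n.
    rewrite <- (is_series_unique _ _ (is_series_sum_n_swap _ _ Hr n)).
    rewrite <- (is_series_unique _ _ HL').
    apply Series_le; [|now exists L'].
    intros y; split; [apply sum_n_ge0; auto|].
    exact (sum_n_le_series _ (fun x => Ha x y) _ (Hcol y) n). }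
  pose proof (series_le_of_sum_n_le _ _ _ HL' Hc_le).
  exists c; split; [exact Hcol|].
  replace L with L' by lra; exact HL'.
Qed.

Lemma is_series_single (f : nat -> R) (w : nat) :
  (forall x, x <> w -> f x = 0) -> is_series f (f w).
Proof.
  intros Hf; change (is_lim_seq (sum_n f) (f w)).
  apply (is_lim_seq_ext_loc (fun _ => f w)); [|apply is_lim_seq_const].
  exists w; intros n Hn; induction n as [|n IH].
  - replace w with 0%nat by lia; now rewrite sum_O.
  - rewrite sum_Sn; unfold plus; simpl.
    destruct (Nat.eq_dec w (S n)) as [->|Hw].
    + assert (Hzero : forall m, (m <= n)%nat -> sum_n f m = 0).
      { induction m as [|m IHm]; intros Hm.
        - rewrite sum_O; apply Hf; lia.
        - rewrite sum_Sn, IHm, Hf by lia; unfold plus; simpl; lra. }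
      rewrite Hzero by lia; lra.
    + rewrite <- IH, (Hf (S n)) by lia; lra.
Qed.

Lemma postproc_bounds (A : nat -> nat -> R) :
  is_postproc A -> forall x w, 0 <= A x w <= 1.
Proof.
  intros HA x w; destruct (HA x) as [HA0 HA1].
  split; [apply HA0|exact (series_term_le _ HA0 _ HA1 w)].
Qed.

Lemma ex_series_dist_weighted (p b : nat -> R) :
  is_dist p -> (forall x, 0 <= b x <= 1) -> ex_series (fun x => p x * b x).
Proof.
  intros [Hp0 Hp1] Hb; apply (ex_series_nonneg_le _ p); [|now exists 1].
  intros x; specialize (Hp0 x); specialize (Hb x); split; nra.
Qed.

Definition dirac_kernel (x w : nat) : R := if Nat.eq_dec x w then 1 else 0.

Definition kernel_comp (A B : nat -> nat -> R) : nat -> nat -> R :=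
  fun x w => Series (fun y => A x y * B y w).

Definition kernel_mix (p : R) (A B : nat -> nat -> R) : nat -> nat -> R :=
  fun x w => p * A x w + (1 - p) * B x w.

Lemma postproc_dirac : is_postproc dirac_kernel.
Proof.
  intros x; split.
  - intros w; unfold dirac_kernel; destruct Nat.eq_dec; lra.
  - replace 1 with (dirac_kernel x x)
      by (unfold dirac_kernel; destruct Nat.eq_dec; congruence).
    apply is_series_single; intros y Hy.
    unfold dirac_kernel; destruct Nat.eq_dec; congruence.
Qed.

Lemma postcomp_dirac {I : Type} (M : algo I) : postcomp dirac_kernel M = M.
Proof.
  apply functional_extensionality; intros D; apply functional_extensionality; intros w.
  apply is_series_unique.
  assert (Hw : M D w * dirac_kernel w w = M D w)
    by (unfold dirac_kernel; destruct Nat.eq_dec; [lra|congruence]).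
  rewrite <- Hw.
  apply (is_series_single (fun x => M D x * dirac_kernel x w)); intros x Hx.
  unfold dirac_kernel; destruct Nat.eq_dec; [congruence|lra].
Qed.

Section KernelComp.

Variables A B : nat -> nat -> R.
Hypotheses (HA : is_postproc A) (HB : is_postproc B).

Lemma is_series_kernel_comp x w :
  is_series (fun y => A x y * B y w) (kernel_comp A B x w).
Proof.
  apply Series_correct, ex_series_dist_weighted; [apply HA|].
  intros y; exact (postproc_bounds B HB y w).
Qed.

Lemma postproc_kernel_comp : is_postproc (kernel_comp A B).
Proof.
  intros x.
  assert (Hge0 : forall y w, 0 <= A x y * B y w).
  { intros y w; pose proof (postproc_bounds A HA x y);
      pose proof (postproc_bounds B HB y w); nra. }
  assert (Hrow : forall y, is_series (fun w => A x y * B y w) (A x y)).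
  { intros y; rewrite <- (Rmult_1_r (A x y)) at 1.
    exact (@is_series_scal_l R_AbsRing R_NormedModule (A x y) _ _ (proj2 (HB y))). }
  destruct (is_series_swap_nonneg _ _ 1 Hge0 Hrow (proj2 (HA x))) as [c [Hc Hc1]].
  assert (Ec : forall w, kernel_comp A B x w = c w).
  { intros w; rewrite <- (is_series_unique _ _ (Hc w)).
    exact (is_series_unique _ _ (is_series_kernel_comp x w)). }
  split.
  - intros w; rewrite Ec, <- (is_series_unique _ _ (Hc w)).
    apply Rle_trans with (A x 0%nat * B 0%nat w); [apply Hge0|].
    exact (series_term_le _ (fun y => Hge0 y w) _ (Series_correct _ (ex_intro _ _ (Hc w))) 0).
  - eapply is_series_ext; [|exact Hc1]; intros w; now rewrite Ec.
Qed.

Lemma postcomp_kernel_comp {I : Type} (M : algo I) :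
  is_algorithm M -> postcomp B (postcomp A M) = postcomp (kernel_comp A B) M.
Proof.
  intros HM.
  apply functional_extensionality; intros D; apply functional_extensionality; intros w.
  destruct (ex_series_dist_weighted (M D) (fun x => kernel_comp A B x w) (HM D)
              (fun x => postproc_bounds _ postproc_kernel_comp x w)) as [L HL].
  assert (Hge0 : forall x y, 0 <= M D x * (A x y * B y w)).
  { intros x y; pose proof (proj1 (HM D) x); pose proof (postproc_bounds A HA x y);
      pose proof (postproc_bounds B HB y w); apply Rmult_le_pos; nra. }
  assert (Hrow : forall x, is_series (fun y => M D x * (A x y * B y w))
                                     (M D x * kernel_comp A B x w)).
  { intros x; exact (@is_series_scal_l R_AbsRing R_NormedModule (M D x) _ _
                       (is_series_kernel_comp x w)). }
  destruct (is_series_swap_nonneg _ _ L Hge0 Hrow HL) as [c [Hc HcL]].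
  unfold postcomp at 1 3; rewrite (is_series_unique _ _ HL), <- (is_series_unique _ _ HcL).
  apply Series_ext; intros y.
  rewrite <- (is_series_unique _ _ (Hc y)); symmetry; apply is_series_unique.
  assert (HMA := Series_correct _ (ex_series_dist_weighted (M D) (fun x => A x y) (HM D)
                                     (fun x => postproc_bounds A HA x y))).
  eapply is_series_ext; [|exact (is_series_scal_r (B y w) _ _ HMA)].
  intros x; simpl; ring.
Qed.

End KernelComp.

Lemma postproc_kernel_mix p A B :
  0 <= p <= 1 -> is_postproc A -> is_postproc B -> is_postproc (kernel_mix p A B).
Proof.
  intros Hp HA HB x; split.
  - intros w; unfold kernel_mix.
    pose proof (postproc_bounds A HA x w); pose proof (postproc_bounds B HB x w); nra.
  - replace 1 with (p * 1 + (1 - p) * 1) by lra.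
    apply (is_series_plus (fun w => p * A x w) (fun w => (1 - p) * B x w)).
    + exact (@is_series_scal_l R_AbsRing R_NormedModule p _ _ (proj2 (HA x))).
    + exact (@is_series_scal_l R_AbsRing R_NormedModule (1 - p) _ _ (proj2 (HB x))).
Qed.

Lemma postcomp_kernel_mix {I : Type} (M : algo I) p A B :
  is_algorithm M -> is_postproc A -> is_postproc B ->
  mix p (postcomp A M) (postcomp B M) = postcomp (kernel_mix p A B) M.
Proof.
  intros HM HA HB.
  apply functional_extensionality; intros D; apply functional_extensionality; intros w.
  assert (HMK : forall K, is_postproc K -> ex_series (fun x => M D x * K x w)).
  { intros K HK; apply ex_series_dist_weighted; [apply HM|].
    intros x; exact (postproc_bounds K HK x w). }
  unfold mix, postcomp, kernel_mix.
  rewrite <- !Series_scal_l, <- Series_plus.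
  - apply Series_ext; intros x; ring.
  - destruct (HMK A HA) as [l Hl].
    exists (p * l); exact (@is_series_scal_l R_AbsRing R_NormedModule p _ _ Hl).
  - destruct (HMK B HB) as [l Hl].
    exists ((1 - p) * l); exact (@is_series_scal_l R_AbsRing R_NormedModule (1 - p) _ _ Hl).
Qed.

Definition postprocessings {I : Type} (M : algo I) (N : algo I) : Prop :=
  exists A, is_postproc A /\ N = postcomp A M.

Section Postprocessings.

Variables (I : Type) (M : algo I).
Hypothesis HM : is_algorithm M.

Lemma postprocessings_self : postprocessings M M.
Proof. exists dirac_kernel; split; [exact postproc_dirac|symmetry; apply postcomp_dirac]. Qed.

Lemma postprocessings_closed_postproc : closed_postproc (postprocessings M).
Proof.
  intros N B [A [HA ->]] HB; exists (kernel_comp A B); split.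
  - exact (postproc_kernel_comp A B HA HB).
  - exact (postcomp_kernel_comp A B HA HB M HM).
Qed.

Lemma postprocessings_closed_convex : closed_convex (postprocessings M).
Proof.
  intros N1 N2 p [A [HA ->]] [B [HB ->]] Hp; exists (kernel_mix p A B); split.
  - exact (postproc_kernel_mix p A B Hp HA HB).
  - exact (postcomp_kernel_mix M p A B HM HA HB).
Qed.

End Postprocessings.

Theorem corollary1 (I : Type)
  (HI : exists f : I -> nat, forall a b, f a = f b -> a = b)
  (M : algo I) (HM : is_algorithm M) :
  forall N : algo I,
    CNF (fun X => X = M) N <-> exists A, is_postproc A /\ N = postcomp A M.
Proof.
  intros N; split.
  - intros HN; apply HN.
    + intros X ->; exact (postprocessings_self I M).
    + exact (postprocessings_closed_postproc I M HM).
    + exact (postprocessings_closed_convex I M HM).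
  - intros [A [HA ->]] S HS Hpost _.
    exact (Hpost M A (HS M eq_refl) HA).
Qed.
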